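(* Let $X_n$ be the maximum weight of a directed path from $1$ to $n$ in the transitive tournament on $\{1,\ldots,n\}$ with independent $\mathrm{Bernoulli}(1/2)$ edge weights. Then \[ \lim_{n\to\infty}\frac{\mathbb{E}[X_n]}{n-1}=\Big(\sum_{n\ge1}2^{-\binom{n}{2}}\Big)^{-1}=0.60914971106\ldots \]
   Context: The transitive tournament on $\{1,\ldots,n\}$ has a directed edge $(i,j)$ for every $1\le i<j\le n$. Each edge independently has weight $1$ with probability $1/2$ and weight $0$ otherwise. The weight of a path is the sum of its edge weights. *)

From HB Require Import structures.
From mathcomp Require Import all_boot all_order all_algebra.
From mathcomp Require Import all_classical all_reals all_analysis.
Set Implicit Arguments. Unset Strict Implicit. Unset Printing Implicit Defensive.
Import Order.TTheory GRing.Theory Num.Theory.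

(* Vertices of the transitive tournament on {1,...,n} are represented by
   'I_n = {0,...,n-1} (vertex k+1 <-> ordinal k). *)

Definition edge (n : nat) := {e : 'I_n * 'I_n | (e.1 < e.2)%N}.

Definition weighting (n : nat) := {ffun edge n -> bool}.

Definition ewt n (w : weighting n) (i j : 'I_n) : nat :=
  match insub (i, j) : option (edge n) with
  | Some e => nat_of_bool (w e)
  | None => 0
  end.

(* Directed paths from vertex 1 to vertex n: in a transitive tournament a
   directed path is determined by its vertex set S (visited in increasing
   order), which must contain the endpoints 1 and n. *)
Definition endpoints_in n (S : {set 'I_n}) : bool :=
  [forall i : 'I_n, ((val i == 0)%N || (val i == n.-1)%N) ==> (i \in S)].

Definition path_vertices n (S : {set 'I_n}) : seq 'I_n :=
  sort (fun i j : 'I_n => (i <= j)%N) (enum S).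

Definition path_weight n (w : weighting n) (S : {set 'I_n}) : nat :=
  let s := path_vertices S in
  \sum_(p <- zip s (behead s)) ewt w p.1 p.2.

Definition Xmax n (w : weighting n) : nat :=
  \max_(S : {set 'I_n} | endpoints_in S) path_weight w S.

(* E[X_n] for independent Bernoulli(1/2) weights = uniform average over
   all 2^(#edges) weightings. *)
Definition EX (R : realType) (n : nat) : R :=
  (\sum_(w : weighting n) (Xmax w)%:R) / (#|{: weighting n}|)%:R.

From HB Require Import structures.
From mathcomp Require Import all_boot all_order all_algebra.
From mathcomp Require Import all_classical all_reals all_analysis.
From mathcomp Require Import zify ring lra.
Set Implicit Arguments. Unset Strict Implicit. Unset Printing Implicit Defensive.
Import Order.TTheory GRing.Theory Num.Theory.
Import numFieldNormedType.Exports.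

(* Let [best v] be the maximum weight of a path from the first vertex to v.
   It grows by at most one per vertex, and it grows at v+1 exactly when a
   weight-1 edge enters v+1 from the current plateau of [best], i.e. from one
   of the [lag v] + 1 last vertices at which [best] already equals [best v].
   These edges are fresh fair coins, so [lag] is a Markov chain that moves from
   m to m+1 with probability 2^-(m+1) and otherwise resets to 0.  Hence
   P(lag v = m) = u (v - m) * 2^-C(m+1,2) with u j = P(lag j = 0), and summing
   over m gives the renewal equation sum_(j <= v) u j r (v - j) = 1 with
   r k = 2^-C(k+1,2).  Since E[X_n] = u 1 + ... + u (n-1), the elementary
   renewal theorem gives E[X_n] / (n-1) --> 1 / sum_k r k. *)

Lemma ewt_le1 n (w : weighting n) x y : ewt w x y <= 1.
Proof. by rewrite /ewt; case: insub => // e; apply: leq_b1. Qed.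

Lemma ewtxx n (w : weighting n) x : ewt w x x = 0.
Proof. by rewrite /ewt insubN //= ltnn. Qed.

Lemma path_vertices_set n (s : seq 'I_n) :
  sorted (fun i j : 'I_n => i < j) s -> path_vertices [set x in s] = s.
Proof.
move=> sorted_s; apply: (@sorted_eq _ (fun i j : 'I_n => i <= j)).
- by move=> x y z; apply: leq_trans.
- by move=> x y /anti_leq; apply: val_inj.
- by apply: sort_sorted => x y; apply: leq_total.
- by apply: sub_sorted sorted_s => x y; apply: ltnW.
rewrite perm_sort; apply: uniq_perm; first exact: enum_uniq.
- by apply: sorted_uniq sorted_s => [x y z|x]; [apply: ltn_trans | apply: ltnn].
- by move=> x; rewrite mem_enum inE.
Qed.

Section Greedy.
Variables (n' : nat) (w : weighting n'.+1).

Definition ew (i j : nat) : nat := ewt w (inord i) (inord j).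

Definition silent (v K : nat) : bool :=
  all (fun k => ew (v - k) v.+1 == 0) (iota 0 K).

(* [v - lag v] is the first vertex at which [best] takes the value [best v]. *)
Fixpoint lag (v : nat) : nat :=
  if v is u.+1 then if silent u (lag u).+1 then (lag u).+1 else 0 else 0.

Definition best (v : nat) : nat := \sum_(i < v) (lag i.+1 == 0).

Lemma ewtE (x y : 'I_n'.+1) : ewt w x y = ew x y.
Proof. by rewrite /ew !inord_val. Qed.

Lemma silentP v K :
  reflect (forall k, k < K -> ew (v - k) v.+1 = 0) (silent v K).
Proof.
apply: (iffP allP) => silent_vK k; rewrite ?mem_iota => lt_kK.
  by apply/eqP/silent_vK; rewrite mem_iota.
by apply/eqP/silent_vK.
Qed.

Lemma silentS v K : silent v K.+1 = silent v K && (ew (v - K) v.+1 == 0).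
Proof. by rewrite /silent -[K.+1]addn1 iotaD all_cat /= andbT. Qed.

Lemma lagS v : lag v.+1 = if silent v (lag v).+1 then (lag v).+1 else 0.
Proof. by []. Qed.

Lemma lag_le v : lag v <= v.
Proof. by elim: v => //= v IH; case: ifP. Qed.

Lemma bestS v : best v.+1 = best v + (lag v.+1 == 0).
Proof. by rewrite /best big_ord_recr. Qed.

Lemma best_mono : {homo best : i j / i <= j}.
Proof. by apply: homo_leq leqnn leq_trans _ => v; rewrite bestS leq_addr. Qed.

Lemma best_plateau i v : i <= v -> (best i == best v) = (v - lag v <= i).
Proof.
elim: v => [|v IH]; first by rewrite leqn0 => /eqP ->; rewrite eqxx.
rewrite leq_eqVlt => /predU1P [->|]; first by rewrite eqxx leq_subr.
rewrite ltnS => le_iv; rewrite bestS lagS; case: ifP => _ /=.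
  by rewrite addn0 subSS IH.
by rewrite subn0 addn1 leqNgt ltnS le_iv ltn_eqF // ltnS best_mono.
Qed.

Lemma best_edge i v : i <= v -> best i + ew i v.+1 <= best v.+1.
Proof.
move=> le_iv; have ew_le1 : ew i v.+1 <= 1 by apply: ewt_le1.
have [eq_best | ne_best] := eqVneq (best i) (best v); last first.
  have : best i < best v by rewrite ltn_neqAle ne_best best_mono.
  by rewrite bestS; lia.
have plateau : v - lag v <= i by rewrite -best_plateau // eq_best.
rewrite bestS eq_best leq_add2l lagS; case: ifP => [/silentP silent_v | _] //=.
rewrite -(subKn le_iv) silent_v //.
by have := lag_le v; lia.
Qed.

Definition walk_weight (x : 'I_n'.+1) (L : seq 'I_n'.+1) : nat :=
  \sum_(p <- zip (x :: L) L) ewt w p.1 p.2.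

Lemma walk_weight_cons x y L :
  walk_weight x (y :: L) = ewt w x y + walk_weight y L.
Proof. by rewrite /walk_weight /= big_cons. Qed.

Lemma walk_weight_rcons x L z :
  walk_weight x (rcons L z) = walk_weight x L + ewt w (last x L) z.
Proof.
elim: L x => [|y L IH] x.
  by rewrite walk_weight_cons /walk_weight !big_nil addn0.
by rewrite rcons_cons !walk_weight_cons IH addnA.
Qed.

Lemma best_edge_ord (x y : 'I_n'.+1) : x <= y -> best x + ewt w x y <= best y.
Proof.
rewrite leq_eqVlt => /predU1P [/val_inj ->|lt_xy]; first by rewrite ewtxx addn0.
have y_gt0 : 0 < y by apply: leq_ltn_trans lt_xy.
by rewrite ewtE -(prednK y_gt0) best_edge // -ltnS prednK.
Qed.

Lemma walk_weight_le_best x L :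
  sorted (fun i j : 'I_n'.+1 => i <= j) (x :: L) ->
  best x + walk_weight x L <= best (last x L).
Proof.
elim: L x => [|y L IH] x /=; first by rewrite /walk_weight big_nil addn0.
case/andP => le_xy sorted_yL; rewrite walk_weight_cons.
by have := IH y sorted_yL; have := best_edge_ord le_xy; lia.
Qed.

Lemma path_weight_le_best S : path_weight w S <= best n'.
Proof.
have : sorted (fun i j : 'I_n'.+1 => i <= j) (path_vertices S).
  by apply: sort_sorted => i j; apply: leq_total.
rewrite /path_weight /=; case: (path_vertices S) => [|x L] sorted_xL /=.
  by rewrite big_nil.
apply: leq_trans (leq_addl (best x) _) _.
apply: leq_trans (walk_weight_le_best sorted_xL) _.
by apply: best_mono; rewrite -ltnS.
Qed.

Lemma best_walk v : v <= n' -> exists L : seq 'I_n'.+1,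
  [/\ sorted (fun i j : 'I_n'.+1 => i < j) (ord0 :: L), last ord0 L = v :> nat
    & best v <= walk_weight ord0 L].
Proof.
elim/ltn_ind: v => -[_ _|v IH le_vn]; first by exists [::]; rewrite /best big_ord0.
pose z : 'I_n'.+1 := inord v.+1; have val_z : z = v.+1 :> nat by rewrite /z inordK.
suff [i [le_iv best_i]] : exists i, i <= v /\ best v.+1 <= best i + ew i v.+1.
  have lt_iv : i < v.+1 by rewrite ltnS.
  have [L [sorted_L last_L best_L]] := IH i lt_iv (leq_trans le_iv (ltnW le_vn)).
  exists (rcons L z); split; last 2 first.
  - by rewrite last_rcons.
  - by rewrite walk_weight_rcons ewtE last_L val_z; lia.
  by rewrite /= rcons_path -/(sorted _ (ord0 :: L)) sorted_L /= last_L val_z ltnS.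
rewrite bestS lagS; case: ifP => [_|/allPn [k]].
  by exists v; rewrite leqnn addn0 leq_addr.
rewrite mem_iota /= => lt_k_lag ew_k; exists (v - k); split; first exact: leq_subr.
have /eqP <- : best (v - k) == best v by rewrite best_plateau ?leq_subr //; lia.
by move: ew_k; rewrite -lt0n; lia.
Qed.

End Greedy.

Lemma Xmax_best n' (w : weighting n'.+1) : Xmax w = best w n'.
Proof.
apply/eqP; rewrite eqn_leq; apply/andP; split.
  by apply/bigmax_leqP => S _; apply: path_weight_le_best.
have [L [sorted_L last_L best_L]] := best_walk w (leqnn n').
have endpoints : endpoints_in [set x in ord0 :: L].
  apply/forallP => i; apply/implyP; rewrite inE => /orP [] /eqP val_i.
    by rewrite (_ : i = ord0) ?mem_head //; apply: val_inj.
  by rewrite (_ : i = last ord0 L) ?mem_last //; apply: val_inj; rewrite /= last_L.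
apply: leq_trans best_L (leq_trans _ (leq_bigmax_cond _ endpoints)).
by rewrite /path_weight /= path_vertices_set.
Qed.

Definition wcount n (P : pred (weighting n)) : nat := \sum_(w : weighting n) P w.

Definition toggle n (e : edge n) (w : weighting n) : weighting n :=
  [ffun e' => (e' == e) (+) w e'].

Lemma toggleK n (e : edge n) : involutive (toggle e).
Proof. by move=> w; apply/ffunP => e'; rewrite !ffunE addbA addbb. Qed.

Lemma ewt_toggle n (e : edge n) w x y :
  (x, y) != val e -> ewt (toggle e w) x y = ewt w x y.
Proof.
rewrite /ewt; case: insubP => // e' _ val_e' ne_e.
by rewrite ffunE -(inj_eq val_inj) val_e' (negbTE ne_e).
Qed.

Lemma wcount_edge0 n (a b : 'I_n) (A : pred (weighting n)) : a < b ->
  (forall w w', (forall x y, (x, y) != (a, b) -> ewt w x y = ewt w' x y) ->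
     A w = A w') ->
  (wcount [pred w | A w && (ewt w a b == 0)]).*2 = wcount A.
Proof.
move=> lt_ab A_indep; pose e : edge n := exist _ (a, b) lt_ab.
have ewt_e w : ewt w a b = w e by rewrite /ewt (_ : (a, b) = val e) // valK.
have A_toggle w : A (toggle e w) = A w.
  by apply: A_indep => x y; exact: (@ewt_toggle n e w x y).
rewrite -addnn {2}/wcount (reindex_inj (can_inj (toggleK e))) -big_split /=.
apply: eq_bigr => w _; rewrite A_toggle !ewt_e ffunE eqxx.
by case: (A w); case: (w e).
Qed.

Section LagDistribution.
Variable n' : nat.
Implicit Types (w : weighting n'.+1) (A : pred (weighting n'.+1)).

Definition agree_below v w w' :=
  forall x y : 'I_n'.+1, y <= v -> ewt w x y = ewt w' x y.

Definition lag_event v m : pred (weighting n'.+1) := [pred w | lag w v == m].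

Lemma lag_agree v w w' : v <= n' -> agree_below v w w' -> lag w v = lag w' v.
Proof.
elim: v => // v IH lt_vn agree.
have agree_v : agree_below v w w' by move=> x y le_yv; apply/agree/leqW.
rewrite !lagS (IH (ltnW lt_vn) agree_v).
congr (if _ then _ else _); apply: eq_in_all => k _.
by rewrite /ew agree // inordK.
Qed.

Lemma wcount_silent v K A : v < n' -> K <= v.+1 ->
  (forall w w', agree_below v w w' -> A w = A w') ->
  wcount [pred w | A w && silent w v K] * 2 ^ K = wcount A.
Proof.
move=> lt_vn; elim: K => [_|K IH lt_Kv] A_below.
  by rewrite muln1; apply: eq_bigr => w _; rewrite /= andbT.
rewrite -(IH (ltnW lt_Kv) A_below) expnS mulnA muln2; congr (_ * _).
pose a : 'I_n'.+1 := inord (v - K); pose b : 'I_n'.+1 := inord v.+1.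
have val_a : a = v - K :> nat by rewrite /a inordK //; lia.
have val_b : b = v.+1 :> nat by rewrite /b inordK.
rewrite -[RHS](@wcount_edge0 _ a b [pred w | A w && silent w v K]); last first.
- move=> w w' agree; congr (_ && _).
  + apply: A_below => x y le_yv; apply: agree.
    by apply: contraTneq le_yv => -[_ ->]; rewrite val_b ltnn.
  + apply: eq_in_all => k; rewrite mem_iota /= => lt_kK; rewrite /ew agree //.
    apply: contraTneq lt_kK => -[/(congr1 (@nat_of_ord _))].
    by rewrite val_a inordK /=; lia.
- by rewrite val_a val_b; lia.
by congr (_.*2); apply: eq_bigr => w _; rewrite /= silentS andbA.
Qed.

Lemma lag_eqS w v m :
  (lag w v.+1 == m.+1) = (lag w v == m) && silent w v m.+1.
Proof.
rewrite lagS; case: ifP => silent_v; rewrite ?eqSS;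
  by case: (lag w v =P m) => // <-; rewrite silent_v.
Qed.

Lemma wcount_lagS v m : v < n' -> m <= v ->
  wcount (lag_event v.+1 m.+1) * 2 ^ m.+1 = wcount (lag_event v m).
Proof.
move=> lt_vn le_mv; rewrite -(@wcount_silent v m.+1 (lag_event v m)) //.
  by congr (_ * _); apply: eq_bigr => w _; rewrite /lag_event /= lag_eqS.
by move=> w w' agree; rewrite /lag_event /= (lag_agree (ltnW lt_vn) agree).
Qed.

Lemma wcount_lag v m : m <= v -> v <= n' ->
  wcount (lag_event v m) * 2 ^ 'C(m.+1, 2) = wcount (lag_event (v - m) 0).
Proof.
elim: m v => [|m IH] v le_mv le_vn; first by rewrite bin_small // muln1 subn0.
case: v le_mv le_vn => // v le_mv le_vn.
by rewrite binS bin1 expnD mulnA mulnAC wcount_lagS // IH // ltnW.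
Qed.

Lemma wcount_lag_partition v :
  \sum_(m < v.+1) wcount (lag_event v m) = #|{: weighting n'.+1}|.
Proof.
rewrite /wcount exchange_big /= -sum1_card; apply: eq_bigr => w _.
rewrite (bigD1 (Ordinal (lag_le w v : lag w v < v.+1))) //= /lag_event /= eqxx.
by rewrite big1 // => m; rewrite -(inj_eq val_inj) eq_sym /= => /negbTE ->.
Qed.

End LagDistribution.

Local Open Scope classical_set_scope.
Local Open Scope ring_scope.

Lemma renewal_unique (R : pzRingType) (r a b : nat -> R) M : r 0 = 1 ->
  (forall v, (v <= M)%N -> \sum_(j < v.+1) a j * r (v - j)%N = 1) ->
  (forall v, (v <= M)%N -> \sum_(j < v.+1) b j * r (v - j)%N = 1) ->
  forall v, (v <= M)%N -> a v = b v.
Proof.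
move=> r0 a_renewal b_renewal; elim/ltn_ind => v IH le_vM.
have sums_eq : \sum_(j < v) a j * r (v - j)%N = \sum_(j < v) b j * r (v - j)%N.
  by apply: eq_bigr => j _; rewrite IH // (leq_trans (ltnW (ltn_ord j))).
move: (a_renewal v le_vM); rewrite -(b_renewal v le_vM).
by rewrite !big_ord_recr /= subnn r0 !mulr1 sums_eq => /addrI.
Qed.

Section RenewalTheorem.
Variables (R : archiRealFieldType) (r u : nat -> R) (mu : R).
Hypotheses (r0 : r 0%N = 1) (r_ge0 : forall k, 0 <= r k).
Hypothesis r_cvg : series r @ \oo --> mu.
Hypothesis u_ge0 : forall j, 0 <= u j.
Hypothesis u_renewal : forall v, \sum_(j < v.+1) u j * r (v - j)%N = 1.

Lemma series_nondecreasing : {homo series r : m n / (m <= n)%N >-> m <= n}.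
Proof. by apply/nondecreasing_seqP => n; rewrite seriesSr lerDl. Qed.

Lemma series_le_lim n : series r n <= mu.
Proof.
rewrite -(cvg_lim (@Rhausdorff R) r_cvg).
exact: (nondecreasing_cvgn_le series_nondecreasing (cvgP _ r_cvg)).
Qed.

Lemma series1 : series r 1 = 1.
Proof. by rewrite seriesEord /= big_ord1. Qed.

Lemma series_ge1 n : 1 <= series r n.+1.
Proof. by rewrite -series1; apply: series_nondecreasing. Qed.

Lemma renewal_seq0 : u 0%N = 1.
Proof. by have := u_renewal 0; rewrite big_ord1 r0 mulr1. Qed.

Lemma renewal_convolution M :
  \sum_(j < M.+1) u j * series r (M - j).+1 = M.+1%:R.
Proof.
elim: M => [|M IH]; first by rewrite big_ord1 series1 renewal_seq0 mulr1.
have := u_renewal M.+1; rewrite big_ord_recr /= subnn r0 mulr1 => renewal.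
rewrite big_ord_recr /= subnn series1 mulr1.
rewrite (eq_bigr (fun j : 'I_M.+1 =>
  u j * series r (M - j).+1 + u j * r (M.+1 - j)%N)).
  by rewrite big_split /= IH -addrA renewal natr1.
by move=> j _; rewrite subSn -1?ltnS // -mulrDr -seriesSr.
Qed.

Lemma renewal_sum_recl n : \sum_(j < n.+1) u j = 1 + \sum_(i < n) u i.+1.
Proof. by rewrite big_ord_recl renewal_seq0. Qed.

Lemma renewal_sum_lbound n : n.+1%:R <= (1 + \sum_(i < n) u i.+1) * mu.
Proof.
rewrite -renewal_sum_recl -[leLHS](renewal_convolution n) mulr_suml.
by apply: ler_sum => j _; apply: ler_wpM2l (u_ge0 j) _ _ (series_le_lim _).
Qed.

Lemma renewal_sum_ubound n K :
  (1 + \sum_(i < n) u i.+1) * series r K.+1 <= (n + K).+1%:R.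
Proof.
rewrite -renewal_sum_recl -[leRHS](renewal_convolution (n + K)) mulr_suml.
have le_n_nK : (n.+1 <= (n + K).+1)%N by rewrite ltnS leq_addr.
rewrite (big_ord_widen _ (fun j => u j * series r K.+1) le_n_nK) big_mkcond /=.
apply: ler_sum => j _; case: ifP => [lt_jn|_].
  by apply: ler_wpM2l (u_ge0 j) _ _ _; apply: series_nondecreasing; lia.
exact: mulr_ge0 (u_ge0 j) (le_trans ler01 (series_ge1 _)).
Qed.

Theorem renewal_mean_cvg :
  (fun n => (\sum_(i < n) u i.+1) / n%:R) @ \oo --> mu^-1.
Proof.
have mu_gt0 : 0 < mu.
  exact: lt_le_trans ltr01 (le_trans (series_ge1 0) (series_le_lim 1)).
have inv_series_cvg : (fun K => (series r K.+1)^-1) @ \oo --> mu^-1.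
  by apply: cvgV; [rewrite gt_eqF | rewrite cvg_shiftS].
apply/cvgrPdist_lt => e e_gt0.
have [K _ /(_ K (leqnn K)) K_close] :
    \forall K \near \oo, (series r K.+1)^-1 < mu^-1 + e / 2.
  by apply: cvgr_lt inv_series_cvg _ _; rewrite ltrDl divr_gt0.
near=> n.
have n_large : K.+1%:R * 2 / e < n%:R by near: n; apply: nbhs_infty_gtr.
have n_gt0 : 0 < n%:R :> R by apply: le_lt_trans n_large; rewrite divr_ge0 ?ltW.
have s_gt0 : 0 < series r K.+1 := lt_le_trans ltr01 (series_ge1 K).
have lb := renewal_sum_lbound n; have ub := renewal_sum_ubound n K.
rewrite -natr1 -ler_pdivrMr // in lb.
rewrite -[(n + K).+1]addn1 !natrD -ler_pdivlMr // in ub.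
rewrite ltr_pdivrMr // -natr1 in n_large.
have m_s : n%:R * (series r K.+1)^-1 <= n%:R * (mu^-1 + e / 2).
  by rewrite ler_wpM2l ?ltW.
have k_s : K%:R * (series r K.+1)^-1 <= K%:R.
  by rewrite ler_piMr ?ler0n // invf_le1 // series_ge1.
have inv_s_le1 : (series r K.+1)^-1 <= 1 by rewrite invf_le1 // series_ge1.
have inv_mu_ge0 : 0 <= mu^-1 by rewrite invr_ge0 ltW.
have k_ge0 : 0 <= K%:R :> R by rewrite ler0n.
rewrite ltr_distlC ltr_pdivlMr // ltr_pdivrMr //.
by apply/andP; split; lra.
Unshelve. all: by end_near. Qed.

End RenewalTheorem.

(* The probability 2^-(1 + ... + k) that [lag] climbs from 0 to k. *)
Definition survival (R : numFieldType) (k : nat) : R := 2 ^- 'C(k.+1, 2).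

Lemma survival0 (R : numFieldType) : survival R 0 = 1.
Proof. by rewrite /survival bin_small // invr1. Qed.

Lemma survival_ge0 (R : numFieldType) k : 0 <= survival R k.
Proof. by rewrite /survival invr_ge0 exprn_ge0. Qed.

Lemma survival_le_geometric (R : numFieldType) k :
  survival R k <= geometric 1 2^-1 k.
Proof.
rewrite /survival /= mul1r exprVn lef_pV2 ?posrE ?exprn_gt0 //.
by rewrite ler_eXn2l ?ltr1n // binS bin1 leq_addl.
Qed.

Lemma survival_series_cvg (R : realType) : cvgn (series (@survival R)).
Proof.
apply: (series_le_cvg (@survival_ge0 R)) _ (@survival_le_geometric R) _.
  by move=> k; rewrite /geometric /= mul1r exprn_ge0 // invr_ge0.
by apply: is_cvg_geometric_series; rewrite ger0_norm ?invr_ge0 // invf_lt1 // ltr1n.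
Qed.

Definition renewal_freq (R : numFieldType) n' v : R :=
  (wcount (@lag_event n' v 0))%:R / #|{: weighting n'.+1}|%:R.

(* By [renewal_unique], [renewal_freq R n' v] is the same for all n' >= v. *)
Definition renewal_prob (R : numFieldType) v : R := renewal_freq R v v.

Section RenewalProbabilities.
Variable R : numFieldType.

Lemma card_weighting_neq0 n : #|{: weighting n}|%:R != 0 :> R.
Proof. by rewrite pnatr_eq0 -lt0n card_ffun expn_gt0 card_bool. Qed.

Lemma renewal_freq_renewal n' v : (v <= n')%N ->
  \sum_(j < v.+1) renewal_freq R n' j * survival R (v - j) = 1.
Proof.
move=> le_vn; have N_neq0 := card_weighting_neq0 n'.+1.
have freq_lag m : (m <= v)%N ->
    (wcount (@lag_event n' v m))%:R / #|{: weighting n'.+1}|%:R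
    = renewal_freq R n' (v - m) * survival R m :> R.
  move=> le_mv; rewrite /renewal_freq -(wcount_lag le_mv le_vn).
  by rewrite natrM natrX /survival mulrAC mulfK // expf_neq0 // pnatr_eq0.
rewrite -(divff N_neq0) -{1}(wcount_lag_partition n' v) natr_sum mulr_suml.
rewrite [LHS](reindex_inj rev_ord_inj); apply: eq_bigr => m _.
have le_mv : (m <= v)%N by rewrite -ltnS.
by rewrite /= subSS subKn // freq_lag.
Qed.

Lemma renewal_freqE n' v : (v <= n')%N -> renewal_freq R n' v = renewal_prob R v.
Proof.
move=> le_vn.
apply: (renewal_unique (b := renewal_freq R v) (survival0 R)) (leqnn v) => j le_jv.
  exact/renewal_freq_renewal/(leq_trans le_jv).
exact: renewal_freq_renewal.
Qed.

Lemma renewal_prob_renewal v :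
  \sum_(j < v.+1) renewal_prob R j * survival R (v - j) = 1.
Proof.
rewrite -(renewal_freq_renewal (leqnn v)); apply: eq_bigr => j _.
by rewrite renewal_freqE // -ltnS.
Qed.

Lemma renewal_prob_ge0 v : 0 <= renewal_prob R v.
Proof. by rewrite divr_ge0. Qed.

End RenewalProbabilities.

Lemma EX_renewal_prob (R : realType) n' :
  EX R n'.+1 = \sum_(i < n') renewal_prob R i.+1.
Proof.
rewrite (eq_bigr (fun i : 'I_n' => renewal_freq R n' i.+1)) => [|i _]; last first.
  exact/esym/renewal_freqE.
rewrite /EX /renewal_freq -mulr_suml -!natr_sum; congr (_%:R / _).
under eq_bigr => w _ do rewrite Xmax_best /best.
by rewrite exchange_big.
Qed.

Theorem corollary6 (R : realType) :
  (fun n : nat => EX R n / (n.-1)%:R) @ \oo -->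
    (limn (fun N : nat => \sum_(1 <= k < N) (2 : R) ^- 'C(k, 2)))^-1.
Proof.
have survival_cvg := @survival_series_cvg R.
have -> : limn (fun N => \sum_(1 <= k < N) (2 : R) ^- 'C(k, 2)) =
          limn (series (@survival R)).
  apply: (cvg_lim (@Rhausdorff R)); rewrite -cvg_shiftS.
  suff -> : (fun N => \sum_(1 <= k < N.+1) (2 : R) ^- 'C(k, 2)) =
            series (@survival R) by [].
  by apply/funext => N; rewrite big_add1 seriesEnat.
rewrite -cvg_shiftS /=.
under eq_fun do rewrite EX_renewal_prob.
apply: renewal_mean_cvg (@survival_ge0 R) survival_cvg _ _.
- exact: survival0.
- exact: renewal_prob_ge0.
- exact: renewal_prob_renewal.
Qed.
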